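(* Let $\varphi : X\to X$ be a morphism in $\mathscr{C}$ with kernel $\kappa : K\to X$ and cokernel $\lambda : X\to L$. Then $\varphi$ has a dual core inverse if and only if $\varphi$ is regular and both $\kappa\lambda : K\to L$ and $\lambda^{*}\lambda : L\to L$ are invertible. In this case, for every $\psi : X\to X$ with $\varphi\psi\varphi=\varphi$, $$\varphi_{\mathrm{core}}=[1_X-\lambda(\lambda^{*}\lambda)^{-1}\lambda^{*}]\,\psi\,[1_X-\lambda(\kappa\lambda)^{-1}\kappa].$$
   Context: $\mathscr{C}$ is an additive category with an involution $*$: a map on morphisms sending $\varphi : X\to Y$ to $\varphi^* : Y \to X$ such that $(\varphi^* )^*=\varphi$, $(\varphi\psi)^*=\psi^*\varphi^*$ and $(\varphi+\phi)^*=\varphi^*+\phi^*$. Composition is written left to right: for $\varphi : X\to Y$ and $\psi : Y\to Z$, $\varphi\psi : X \to Z$ means ''first $\varphi$, then $\psi$''. A kernel of $\varphi : X\to Y$ is a morphism $\kappa : K\to X$ with $\kappa\varphi=0$ such that every $\alpha : M\to X$ with $\alpha\varphi=0$ factors uniquely as $\alpha=\alpha'\kappa$. A cokernel of $\varphi$ is a morphism $\lambda : Y\to L$ with $\varphi\lambda=0$ such that every $\beta : Y\to M$ with $\varphi\beta=0$ factors uniquely as $\beta=\lambda\beta'$. $\varphi$ is regular if there is $\chi$ with $\varphi\chi\varphi=\varphi$. A morphism is invertible if it has a two-sided inverse. For $\varphi : X\to X$, a dual core inverse of $\varphi$ is a morphism $\chi : X\to X$ with $(\chi\varphi)^*=\chi\varphi$,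 $\chi^2\varphi=\chi$ and $\varphi^2\chi=\varphi$. It is unique when it exists and is denoted $\varphi_{\mathrm{core}}$. *)

From HB Require Import structures.
From mathcomp Require Import all_boot ssralg.
Set Implicit Arguments. Unset Strict Implicit. Unset Printing Implicit Defensive.
Import GRing.Theory.
Local Open Scope ring_scope.

(* An additive category with an involution *.
   Composition is written LEFT TO RIGHT: ccomp f g = "first f, then g". *)
Structure AddInvCat := {
  Ob : Type;
  CHom : Ob -> Ob -> zmodType;
  ccomp : forall X Y Z : Ob, CHom X Y -> CHom Y Z -> CHom X Z;
  cidm : forall X : Ob, CHom X X;
  compA : forall X Y Z W (f : CHom X Y) (g : CHom Y Z) (h : CHom Z W),
      ccomp (ccomp f g) h = ccomp f (ccomp g h);
  comp1f : forall X Y (f : CHom X Y), ccomp (cidm X) f = f;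
  compf1 : forall X Y (f : CHom X Y), ccomp f (cidm Y) = f;
  compDl : forall X Y Z (f f' : CHom X Y) (g : CHom Y Z),
      ccomp (f + f') g = ccomp f g + ccomp f' g;
  compDr : forall X Y Z (f : CHom X Y) (g g' : CHom Y Z),
      ccomp f (g + g') = ccomp f g + ccomp f g';
  zob : Ob;
  zob_init : forall X (f g : CHom zob X), f = g;
  zob_term : forall X (f g : CHom X zob), f = g;
  bprod : Ob -> Ob -> Ob;
  bin1 : forall X Y, CHom X (bprod X Y);
  bin2 : forall X Y, CHom Y (bprod X Y);
  bpr1 : forall X Y, CHom (bprod X Y) X;
  bpr2 : forall X Y, CHom (bprod X Y) Y;
  bin1pr1 : forall X Y, ccomp (bin1 X Y) (bpr1 X Y) = cidm X;
  bin2pr2 : forall X Y, ccomp (bin2 X Y) (bpr2 X Y) = cidm Y;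
  bin1pr2 : forall X Y, ccomp (bin1 X Y) (bpr2 X Y) = 0;
  bin2pr1 : forall X Y, ccomp (bin2 X Y) (bpr1 X Y) = 0;
  bprsum : forall X Y,
      ccomp (bpr1 X Y) (bin1 X Y) + ccomp (bpr2 X Y) (bin2 X Y) = cidm (bprod X Y);
  cinv : forall X Y, CHom X Y -> CHom Y X;
  invK : forall X Y (f : CHom X Y), cinv (cinv f) = f;
  invM : forall X Y Z (f : CHom X Y) (g : CHom Y Z), cinv (ccomp f g) = ccomp (cinv g) (cinv f);
  invD : forall X Y (f g : CHom X Y), cinv (f + g) = cinv f + cinv g
}.

Arguments ccomp {_ X Y Z} f g.
Arguments cidm {_} X.
Arguments cinv {_ X Y} f.

Section Defs.
Variable C : AddInvCat.

Definition is_kernel (X Y K : Ob C) (phi : CHom X Y) (kap : CHom K X) : Prop :=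
  ccomp kap phi = 0 /\
  forall (M : Ob C) (a : CHom M X), ccomp a phi = 0 ->
    exists! a' : CHom M K, a = ccomp a' kap.

Definition is_cokernel (X Y L : Ob C) (phi : CHom X Y) (lam : CHom Y L) : Prop :=
  ccomp phi lam = 0 /\
  forall (M : Ob C) (b : CHom Y M), ccomp phi b = 0 ->
    exists! b' : CHom L M, b = ccomp lam b'.

Definition regular (X Y : Ob C) (phi : CHom X Y) : Prop :=
  exists chi : CHom Y X, ccomp (ccomp phi chi) phi = phi.

Definition is_inverse (X Y : Ob C) (f : CHom X Y) (g : CHom Y X) : Prop :=
  ccomp f g = cidm X /\ ccomp g f = cidm Y.

Definition invertible (X Y : Ob C) (f : CHom X Y) : Prop :=
  exists g : CHom Y X, is_inverse f g.

Definition is_dual_core_inverse (X : Ob C) (phi chi : CHom X X) : Prop :=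
  cinv (ccomp chi phi) = ccomp chi phi /\
  ccomp (ccomp chi chi) phi = chi /\
  ccomp (ccomp phi phi) chi = phi.
End Defs.

From Pilot Require Import Defs.
From HB Require Import structures.
From mathcomp Require Import all_boot ssralg.
Import GRing.Theory.
Local Open Scope ring_scope.

(* For a dual core inverse [chi], the idempotent [chi phi] is self-adjoint,
   kills [lam] on the right and leaves [1 - chi phi] factoring through [lam];
   these properties force [chi phi = E := 1 - lam (lam^* lam)^-1 lam^*].
   With [F := 1 - lam (kap lam)^-1 kap], which kills [kap] on the left and
   [lam] on the right, one gets [chi = E psi F] for every inner inverse [psi],
   and conversely [E psi F] is always a dual core inverse. The inverses of
   [kap lam] and [lam^* lam] are built from the factorizations of
   [1 - phi chi] through [kap] and [lam] and of [1 - chi phi] through [lam]. *)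

Set Implicit Arguments.
Unset Strict Implicit.

Local Infix "⨾" := ccomp (at level 40, left associativity).
Local Notation compA := Defs.compA.

Section Additivity.
Variable C : AddInvCat.
Implicit Types X Y Z : Ob C.

Lemma comp0r X Y Z (f : CHom X Y) : f ⨾ (0 : CHom Y Z) = 0.
Proof. by apply: (addrI (f ⨾ 0)); rewrite -compDr !addr0. Qed.

Lemma comp0l X Y Z (f : CHom Y Z) : (0 : CHom X Y) ⨾ f = 0.
Proof. by apply: (addrI (0 ⨾ f)); rewrite -compDl !addr0. Qed.

Lemma compNr X Y Z (f : CHom X Y) (g : CHom Y Z) : f ⨾ (- g) = - (f ⨾ g).
Proof. by apply: (addrI (f ⨾ g)); rewrite -compDr !subrr comp0r. Qed.

Lemma compNl X Y Z (f : CHom X Y) (g : CHom Y Z) : (- f) ⨾ g = - (f ⨾ g).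
Proof. by apply: (addrI (f ⨾ g)); rewrite -compDl !subrr comp0l. Qed.

Lemma compBr X Y Z (f : CHom X Y) (g h : CHom Y Z) : f ⨾ (g - h) = f ⨾ g - f ⨾ h.
Proof. by rewrite compDr compNr. Qed.

Lemma compBl X Y Z (f g : CHom X Y) (h : CHom Y Z) : (f - g) ⨾ h = f ⨾ h - g ⨾ h.
Proof. by rewrite compDl compNl. Qed.

Lemma cinv0 X Y : cinv (0 : CHom X Y) = 0.
Proof. by apply: (addrI (cinv (0 : CHom X Y))); rewrite -invD !addr0. Qed.

Lemma cinvN X Y (f : CHom X Y) : cinv (- f) = - cinv f.
Proof. by apply: (addrI (cinv f)); rewrite -invD !subrr cinv0. Qed.

Lemma cinvB X Y (f g : CHom X Y) : cinv (f - g) = cinv f - cinv g.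
Proof. by rewrite invD cinvN. Qed.

Lemma cinv1 X : cinv (cidm X) = cidm X.
Proof. by have := invM (cinv (cidm X)) (cidm X); rewrite !(compf1, invK) => <-. Qed.

Lemma compr_idB X Y Z (f : CHom X Y) (g : CHom Y Z) (h : CHom Z Y) :
  f ⨾ g = 0 -> f ⨾ (cidm Y - g ⨾ h) = f.
Proof. by move=> fg0; rewrite compBr compf1 -compA fg0 comp0l subr0. Qed.

Lemma compl_idB X Y Z (f : CHom Y Z) (g : CHom X Y) (h : CHom Y X) :
  g ⨾ f = 0 -> (cidm Y - h ⨾ g) ⨾ f = f.
Proof. by move=> gf0; rewrite compBl comp1f compA gf0 comp0r subr0. Qed.

End Additivity.

Section Inverses.
Variable C : AddInvCat.
Implicit Types X K L : Ob C.

Lemma comp_split_is_inverse X K L (kap : CHom K X) (lam : CHom X L)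
    (a : CHom X K) (b : CHom L X) :
  kap ⨾ a = cidm K -> b ⨾ lam = cidm L -> a ⨾ kap = lam ⨾ b ->
  is_inverse (kap ⨾ lam) (b ⨾ a).
Proof.
move=> ka1 bl1 ab; split.
- by rewrite compA -(compA lam) -ab compA -compA ka1 comp1f.
- by rewrite compA -(compA a) ab compA -compA bl1 comp1f.
Qed.

Lemma gram_is_inverse X L (lam : CHom X L) (c : CHom L X) :
  c ⨾ lam = cidm L -> cinv (lam ⨾ c) = lam ⨾ c ->
  is_inverse (cinv lam ⨾ lam) (c ⨾ cinv c).
Proof.
move=> cl1 lc_sa; split.
- rewrite compA -(compA lam) -lc_sa invM compA -compA.
  by rewrite -invM cl1 cinv1 comp1f.
- by rewrite compA -(compA (cinv c)) -invM lc_sa compA -compA cl1 comp1f.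
Qed.

Lemma inverse_selfadjoint L (w v : CHom L L) :
  cinv w = w -> is_inverse w v -> cinv v = v.
Proof.
move=> w_sa [wv1 vw1].
have vw1' : cinv v ⨾ w = cidm L by rewrite -w_sa -invM wv1 cinv1.
by rewrite -[cinv v]compf1 -wv1 -compA vw1' comp1f.
Qed.

(* Two self-adjoint morphisms absorbing each other coincide:
   [Q = (Q P)^* = P Q = P]. *)
Lemma selfadjoint_absorb_eq X (P Q : CHom X X) :
  cinv P = P -> cinv Q = Q -> P ⨾ Q = P -> Q ⨾ P = Q -> P = Q.
Proof. by move=> P_sa Q_sa PQ QP; rewrite -[Q]Q_sa -QP invM P_sa Q_sa PQ. Qed.

End Inverses.

Section Factorization.
Variables (C : AddInvCat) (X Y K L : Ob C).
Variables (phi : CHom X Y) (kap : CHom K X) (lam : CHom Y L).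
Hypotheses (hker : is_kernel phi kap) (hcok : is_cokernel phi lam).

Lemma kernel_factor M (a : CHom M X) : a ⨾ phi = 0 -> exists a', a = a' ⨾ kap.
Proof. by move=> /hker.2 [a' [? _]]; exists a'. Qed.

Lemma cokernel_factor M (b : CHom Y M) : phi ⨾ b = 0 -> exists b', b = lam ⨾ b'.
Proof. by move=> /hcok.2 [b' [? _]]; exists b'. Qed.

Lemma kernel_mono M (x y : CHom M K) : x ⨾ kap = y ⨾ kap -> x = y.
Proof.
move=> e; have [a' [_ uniq_a']] : exists! a', y ⨾ kap = a' ⨾ kap.
  by apply: hker.2; rewrite compA hker.1 comp0r.
by rewrite -(uniq_a' x (esym e)) -(uniq_a' y erefl).
Qed.

Lemma cokernel_epi M (x y : CHom L M) : lam ⨾ x = lam ⨾ y -> x = y.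
Proof.
move=> e; have [b' [_ uniq_b']] : exists! b', lam ⨾ y = lam ⨾ b'.
  by apply: hcok.2; rewrite -compA hcok.1 comp0l.
by rewrite -(uniq_b' x (esym e)) -(uniq_b' y erefl).
Qed.

Lemma inner_inverse_kernel (psi : CHom Y X) :
  phi ⨾ psi ⨾ phi = phi -> exists d, phi ⨾ psi = cidm X - d ⨾ kap.
Proof.
move=> inner; have [d hd] : exists d, cidm X - phi ⨾ psi = d ⨾ kap.
  by apply: kernel_factor; rewrite compBl comp1f inner subrr.
by exists d; rewrite -hd opprB addrC subrK.
Qed.

Lemma inner_inverse_cokernel (psi : CHom Y X) :
  phi ⨾ psi ⨾ phi = phi -> exists e, psi ⨾ phi = cidm Y - lam ⨾ e.
Proof.
move=> inner; have [e he] : exists e, cidm Y - psi ⨾ phi = lam ⨾ e.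
  by apply: cokernel_factor; rewrite compBr compf1 -compA inner subrr.
by exists e; rewrite -he opprB addrC subrK.
Qed.

End Factorization.

Section DualCoreInverse.
Variables (C : AddInvCat) (X K L : Ob C).
Variables (phi : CHom X X) (kap : CHom K X) (lam : CHom X L).
Hypotheses (hker : is_kernel phi kap) (hcok : is_cokernel phi lam).

Section Necessity.
Variable chi : CHom X X.
Hypothesis hchi : is_dual_core_inverse phi chi.

Lemma dcore_inner : phi ⨾ chi ⨾ phi = phi.
Proof.
have [_ [chi2phi phi2chi]] := hchi.
by rewrite -{1}phi2chi !compA -(compA chi) chi2phi -compA phi2chi.
Qed.

Lemma dcore_comp_cokernel : chi ⨾ lam = 0.
Proof. by rewrite -hchi.2.1 compA hcok.1 comp0r. Qed.

Lemma dcore_kernel_cokernel_invertible : invertible (kap ⨾ lam).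
Proof.
have [a ha] := inner_inverse_kernel hker dcore_inner.
have [b hb] : exists b, cidm X - phi ⨾ chi = lam ⨾ b.
  by apply: (cokernel_factor hcok); rewrite compBr compf1 -compA hchi.2.2 subrr.
have ab : a ⨾ kap = lam ⨾ b by rewrite -hb ha opprB addrC subrK.
exists (b ⨾ a); refine (comp_split_is_inverse _ _ ab).
- apply: (kernel_mono hker); rewrite comp1f compA ab -hb.
  exact: compr_idB hker.1.
- apply: (cokernel_epi hcok); rewrite compf1 -compA -hb.
  exact: compl_idB dcore_comp_cokernel.
Qed.

Lemma dcore_gram_invertible : invertible (cinv lam ⨾ lam).
Proof.
have [c hc] := inner_inverse_cokernel hcok dcore_inner.
have lc : lam ⨾ c = cidm X - chi ⨾ phi by rewrite hc opprB addrC subrK.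
exists (c ⨾ cinv c); apply: gram_is_inverse.
- apply: (cokernel_epi hcok); rewrite compf1 -compA lc.
  exact: compl_idB hcok.1.
- by rewrite lc cinvB cinv1 hchi.1.
Qed.

End Necessity.

Section Sufficiency.
Variables (psi : CHom X X) (u : CHom L K) (v : CHom L L).
Hypotheses (hpsi : phi ⨾ psi ⨾ phi = phi)
  (hu : is_inverse (kap ⨾ lam) u) (hv : is_inverse (cinv lam ⨾ lam) v).

Local Notation E := (cidm X - lam ⨾ v ⨾ cinv lam).
Local Notation F := (cidm X - lam ⨾ u ⨾ kap).

Lemma gram_projection_selfadjoint : cinv E = E.
Proof.
have v_sa : cinv v = v by apply: inverse_selfadjoint hv; rewrite invM invK.
by rewrite cinvB cinv1 !invM invK v_sa compA.
Qed.

Lemma gram_projection_cokernel : E ⨾ lam = 0.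
Proof. by rewrite compBl comp1f !compA hv.2 compf1 subrr. Qed.

Lemma kernel_projection_kernel : kap ⨾ F = 0.
Proof. by rewrite compBr compf1 -!compA hu.1 comp1f subrr. Qed.

Lemma kernel_projection_cokernel : F ⨾ lam = 0.
Proof. by rewrite compBl comp1f !compA hu.2 compf1 subrr. Qed.

Lemma comp_gram_projection M (f : CHom M X) : f ⨾ lam = 0 -> f ⨾ E = f.
Proof. by move=> f0; apply: compr_idB; rewrite -compA f0 comp0l. Qed.

Lemma comp_kernel_projection M (f : CHom M X) : f ⨾ lam = 0 -> f ⨾ F = f.
Proof. by move=> f0; apply: compr_idB; rewrite -compA f0 comp0l. Qed.

Lemma sandwich_comp : E ⨾ psi ⨾ F ⨾ phi = E.
Proof.
have [e he] := inner_inverse_cokernel hcok hpsi.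
rewrite compA (compl_idB _ hker.1) compA he.
exact: compr_idB gram_projection_cokernel.
Qed.

Lemma sandwich_is_dual_core_inverse : is_dual_core_inverse phi (E ⨾ psi ⨾ F).
Proof.
have [d hd] := inner_inverse_kernel hker hpsi.
split; first by rewrite sandwich_comp gram_projection_selfadjoint.
split; first by rewrite compA sandwich_comp compA
  (comp_gram_projection kernel_projection_cokernel).
rewrite (compA phi) -(compA phi _ F) -(compA phi E) (comp_gram_projection hcok.1) hd.
by rewrite (compl_idB _ kernel_projection_kernel) (comp_kernel_projection hcok.1).
Qed.

Lemma dcore_eq_sandwich (chi : CHom X X) :
  is_dual_core_inverse phi chi -> chi = E ⨾ psi ⨾ F.
Proof.
move=> hchi; have [c hc] := inner_inverse_cokernel hcok (dcore_inner hchi).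
have [d hd] := inner_inverse_kernel hker hpsi.
have projE : E = chi ⨾ phi.
  apply: selfadjoint_absorb_eq gram_projection_selfadjoint hchi.1 _ _.
    by rewrite hc; apply: compr_idB gram_projection_cokernel.
  by rewrite compA (comp_gram_projection hcok.1).
rewrite projE (compA chi phi psi) hd compA (compl_idB _ kernel_projection_kernel).
by rewrite (comp_kernel_projection (dcore_comp_cokernel hchi)).
Qed.

End Sufficiency.
End DualCoreInverse.

Theorem theorem3p4 (C : AddInvCat) (X K L : Ob C)
    (phi : CHom X X) (kap : CHom K X) (lam : CHom X L)
    (hker : is_kernel phi kap) (hcok : is_cokernel phi lam) :
  ((exists chi : CHom X X, is_dual_core_inverse phi chi) <->
     (regular phi /\ invertible (ccomp kap lam) /\ invertible (ccomp (cinv lam) lam)))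
  /\
  (forall (chi psi : CHom X X) (u : CHom L K) (v : CHom L L),
     is_dual_core_inverse phi chi ->
     ccomp (ccomp phi psi) phi = phi ->
     is_inverse (ccomp kap lam) u ->
     is_inverse (ccomp (cinv lam) lam) v ->
     chi = ccomp (ccomp (cidm X - ccomp (ccomp lam v) (cinv lam)) psi)
                (cidm X - ccomp (ccomp lam u) kap)).
Proof.
split; last first.
  move=> chi psi u v hchi hpsi hu hv.
  exact: (dcore_eq_sandwich hker hcok hpsi hu hv hchi).
split.
- move=> [chi hchi]; split; first by exists chi; exact: dcore_inner hchi.
  split; [exact: (dcore_kernel_cokernel_invertible hker hcok hchi)
         | exact: (dcore_gram_invertible hcok hchi)].
- move=> [[psi hpsi] [[u hu] [v hv]]].
  by eexists; apply: (sandwich_is_dual_core_inverse hker hcok hpsi hu hv).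
Qed.
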